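(* Let $K$ be a field of characteristic zero, and let $F,\ell\in K[X]$ satisfy $\deg(F)=d>1=\deg(\ell)$. Suppose that, for infinitely many $n>0$, there is a degree-one $\ell_n\in K[X]$ such that $F^n=(F\circ\ell)^n\circ\ell_n$. Then either (1) $F^k=(F\circ\ell)^k$ for some $k\in\mathbb{N}$; or (2) $F=v^{-1}\circ\epsilon X^d\circ v$ and $\ell=v^{-1}\circ\delta X\circ v$ for some degree-one $v\in K[X]$ and some $\epsilon,\delta\in K^*$.
   Context: $F^n$ denotes the $n$-th iterate of $F$ under composition $\circ$; $v^{-1}$ is the compositional inverse of the degree-one polynomial $v$. *)

From HB Require Import structures.
From mathcomp Require Import all_boot all_order all_algebra.
Set Implicit Arguments. Unset Strict Implicit. Unset Printing Implicit Defensive.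
Import GRing.Theory.
Local Open Scope ring_scope.

Definition poly_iter (K : fieldType) (F : {poly K}) (n : nat) : {poly K} :=
  iter n (fun q => F \Po q) 'X.

Definition lin_inv (K : fieldType) (v : {poly K}) : {poly K} :=
  (lead_coef v)^-1 *: ('X - (v`_0)%:P).

From HB Require Import structures.
From mathcomp Require Import all_boot all_order all_algebra.
From mathcomp Require Import zify.
Set Implicit Arguments. Unset Strict Implicit. Unset Printing Implicit Defensive.
Import GRing.Theory.
Local Open Scope ring_scope.

(* Conjugating by a translation we may assume that F is centered, i.e. has no
   X^(d-1) term.  The key tool is the uniqueness of decompositions in
   characteristic zero: A \Po C = B \Po D with deg A = deg B and deg C = deg D
   forces D = mu \Po C and A = B \Po mu for some degree-one mu.  Applied to
   F^n = G^n \Po l_n (with G = F \Po l), it makes beta = l_n^-1 \Po l_m a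
   symmetry of F^2 up to degree-one maps; since F is centered, beta = b X with
   b^(d-i) = 1 whenever i < d and the coefficient F_i is nonzero.  If F is not
   a monomial there are only finitely many such b, so l_m = l_n for some m < n,
   and cancelling gives F^(n-m) = G^(n-m).  If F = c X^d, the same decomposition
   argument shows that l fixes 0. *)

Section LinearPolynomials.
Variable K : fieldType.
Implicit Types (p q r v : {poly K}).

Lemma lin_polyE p : (size p <= 2)%N -> p = p`_1 *: 'X + (p`_0)%:P.
Proof.
move=> sp; apply/polyP => i; rewrite coefD coefZ coefX coefC.
case: i => [|[|i]] /=; rewrite ?mulr0 ?mulr1 ?add0r ?addr0 //.
by rewrite nth_default // (leq_trans sp).
Qed.

Lemma comp_lin_polyE (a b : K) p : (a *: 'X + b%:P) \Po p = a *: p + b%:P.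
Proof. by rewrite comp_polyD comp_polyZ comp_polyX comp_polyC. Qed.

Lemma coef_deg_neq0 p d : size p = d.+1 -> p`_d != 0.
Proof.
by move=> sp; rewrite -[d]/(d.+1.-1) -sp -lead_coefE lead_coef_eq0 -size_poly_eq0 sp.
Qed.

Lemma lead_coef_lin v : size v = 2 -> lead_coef v = v`_1.
Proof. by rewrite lead_coefE => ->. Qed.

Lemma lin_coef1_neq0 v : size v = 2 -> v`_1 != 0.
Proof. by move=> sv; rewrite -lead_coef_lin // lead_coef_eq0 -size_poly_eq0 sv. Qed.

Lemma lin_invK v : size v = 2 -> lin_inv v \Po v = 'X.
Proof.
move=> sv; rewrite /lin_inv comp_polyZ comp_polyB comp_polyX comp_polyC.
rewrite lead_coef_lin // [v in v - _](lin_polyE (eq_leq sv)) addrK scalerA.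
by rewrite mulVf ?scale1r ?lin_coef1_neq0.
Qed.

Lemma lin_invVK v : size v = 2 -> v \Po lin_inv v = 'X.
Proof.
move=> sv; rewrite [v in v \Po _](lin_polyE (eq_leq sv)) comp_lin_polyE.
by rewrite /lin_inv lead_coef_lin // scalerA mulfV ?lin_coef1_neq0 // scale1r subrK.
Qed.

Lemma size_lin_inv v : size v = 2 -> size (lin_inv v) = 2.
Proof.
move=> sv; rewrite /lin_inv size_scale ?size_XsubC // invr_eq0 lead_coef_lin //.
exact: lin_coef1_neq0.
Qed.

Lemma size_scaleX (c : K) : c != 0 -> size (c *: 'X : {poly K}) = 2.
Proof. by move=> c0; rewrite size_scale // size_polyX. Qed.

Lemma size_comp_lin v p : size v = 2 -> (1 < size p)%N -> size (v \Po p) = size p.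
Proof.
move=> sv sp; have := size_comp_poly v p; rewrite sv mul1n => e.
have vp0 : v \Po p != 0 by rewrite comp_poly_eq0 // -size_poly_eq0 sv.
by rewrite -[LHS]prednK ?size_poly_gt0 // e prednK // ltnW.
Qed.

Lemma comp_polyIr r p q : (1 < size r)%N -> p \Po r = q \Po r -> p = q.
Proof.
move=> sr e; apply/eqP; rewrite -subr_eq0 -(comp_poly_eq0 _ sr) comp_polyB e.
by rewrite subrr.
Qed.

Lemma coef_comp_scaleX p (u : K) i : (p \Po (u *: 'X))`_i = u ^+ i * p`_i.
Proof.
elim/poly_ind: p i => [|q c IH] i; first by rewrite comp_poly0 !coef0 mulr0.
rewrite comp_poly_MXaddC -scalerAr !coefD !coefC coefZ !coefMX.
case: i => [|i] /=; first by rewrite mulr0 !add0r expr0 mul1r.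
by rewrite !addr0 IH exprS mulrA.
Qed.

Lemma derivn_comp_lin p v k :
  size v = 2 -> (p \Po v)^`(k) = v`_1 ^+ k *: (p^`(k) \Po v).
Proof.
move=> sv; have dv : v^`() = (v`_1)%:P.
  by rewrite [v in LHS](lin_polyE (eq_leq sv)) derivD derivZ derivX derivC addr0 alg_polyC.
elim: k => [|k IH]; first by rewrite expr0 scale1r !derivn0.
rewrite derivnS IH derivZ deriv_comp dv mulrC mul_polyC scalerA -exprSr.
by rewrite -derivnS.
Qed.

End LinearPolynomials.

Section Iterates.
Variable K : fieldType.
Implicit Types (F G p q v : {poly K}).

Lemma poly_iter0 F : poly_iter F 0 = 'X.
Proof. by []. Qed.

Lemma poly_iterS F n : poly_iter F n.+1 = F \Po poly_iter F n.
Proof. by []. Qed.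

Lemma poly_iter2 F : poly_iter F 2 = F \Po F.
Proof. by rewrite !poly_iterS poly_iter0 comp_polyXr. Qed.

Lemma poly_iterD F m n : poly_iter F (m + n) = poly_iter F m \Po poly_iter F n.
Proof.
elim: m => [|m IH]; first by rewrite add0n poly_iter0 comp_polyX.
by rewrite addSn !poly_iterS IH comp_polyA.
Qed.

Lemma size_poly_iter F n :
  (1 < size F)%N -> size (poly_iter F n) = ((size F).-1 ^ n).+1.
Proof.
move=> sF; have d_gt0 : (0 < (size F).-1)%N by rewrite -ltnS prednK // ltnW.
elim: n => [|n IH]; first by rewrite poly_iter0 size_polyX expn0.
have sFn : (1 < size (poly_iter F n))%N by rewrite IH ltnS expn_gt0 d_gt0.
have F0 : F \Po poly_iter F n != 0 by rewrite comp_poly_eq0 // -size_poly_gt0 ltnW.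
by rewrite poly_iterS -[LHS]prednK ?size_poly_gt0 // size_comp_poly IH expnS.
Qed.

Lemma size_poly_iter_gt1 F n : (1 < size F)%N -> (1 < size (poly_iter F n))%N.
Proof.
by move=> sF; rewrite size_poly_iter // ltnS expn_gt0 -ltnS prednK ?sF // ltnW.
Qed.

Lemma poly_iter_sub F G m n lam : (1 < size F)%N -> (m < n)%N ->
  poly_iter F m = poly_iter G m \Po lam ->
  poly_iter F n = poly_iter G n \Po lam ->
  poly_iter F (n - m) = poly_iter G (n - m).
Proof.
move=> sF mn Em En; have nmK := subnK (ltnW mn).
apply: (comp_polyIr (size_poly_iter_gt1 m sF)).
by rewrite -poly_iterD nmK En Em comp_polyA -poly_iterD nmK.
Qed.

Definition lin_conj v p := v \Po (p \Po lin_inv v).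

Lemma lin_conj_comp v p q : size v = 2 ->
  lin_conj v (p \Po q) = lin_conj v p \Po lin_conj v q.
Proof.
move=> sv; rewrite /lin_conj !comp_polyA -[((v \Po p) \Po lin_inv v) \Po v]comp_polyA.
by rewrite lin_invK // comp_polyXr.
Qed.

Lemma lin_conj_iter v F n : size v = 2 ->
  poly_iter (lin_conj v F) n = lin_conj v (poly_iter F n).
Proof.
move=> sv; elim: n => [|n IH]; first by rewrite !poly_iter0 /lin_conj comp_polyX lin_invVK.
by rewrite !poly_iterS IH lin_conj_comp.
Qed.

Lemma lin_conjK v p : size v = 2 -> lin_inv v \Po (lin_conj v p \Po v) = p.
Proof.
move=> sv; rewrite /lin_conj !comp_polyA lin_invK // comp_polyX -comp_polyA.
by rewrite lin_invK // comp_polyXr.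
Qed.

Lemma size_lin_conj v p : size v = 2 -> (1 < size p)%N ->
  size (lin_conj v p) = size p.
Proof. by move=> sv sp; rewrite size_comp_lin ?size_comp_poly2 ?size_lin_inv. Qed.

End Iterates.

Lemma unity_root_collision (K : fieldType) (k : nat) (R : nat -> K -> Prop) :
  (0 < k)%N -> (forall N, exists n u, [/\ (N < n)%N, u ^+ k = 1 & R n u]) ->
  exists m n u, [/\ (m < n)%N, R m u & R n u].
Proof.
move=> k_gt0 Rinf.
have grow t : (exists m n u, [/\ (m < n)%N, R m u & R n u]) \/
    exists s B, [/\ uniq s, size s = t, all k.-unity_root s &
                    forall u, u \in s -> exists2 m, (m <= B)%N & R m u].
  elim: t => [|t [|[s [B [s_uniq s_size s_roots sB]]]]]; [|by left|].
    by right; exists [::], 0%N.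
  have [n [u [Bn uk Rnu]]] := Rinf B.
  have [us|uNs] := boolP (u \in s).
    by left; have [m mB Rmu] := sB u us; exists m, n, u; rewrite (leq_ltn_trans mB).
  right; exists (u :: s), n; split;
    rewrite /= ?uNs ?s_uniq ?s_size ?unity_rootE ?uk ?eqxx ?s_roots //.
  move=> u'; rewrite in_cons => /orP [/eqP->|u's]; first by exists n.
  by have [m mB Rmu'] := sB u' u's; exists m => //; rewrite (leq_trans mB) // ltnW.
have [//|[s [B [s_uniq s_size s_roots _]]]] := grow k.+1.
by have := max_unity_roots k_gt0 s_roots s_uniq; rewrite s_size ltnn.
Qed.

Section CharacteristicZero.
Variable K : fieldType.
Hypothesis char0 : [pchar K] =i pred0.
Implicit Types (A B C D F P v w beta rho mu nu : {poly K}).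

Lemma natr_char0_neq0 k : (0 < k)%N -> k%:R != 0 :> K.
Proof. by move: char0 => /pcharf0P ->; rewrite -lt0n. Qed.

Lemma size_sub_lead_coefXn P n :
  size P = n.+2 -> (size (P - lead_coef P *: 'X^(n.+1))%R <= n.+1)%N.
Proof.
move=> sP; apply/leq_sizeP => j hj; rewrite coefB coefZ coefXn.
case: (ltngtP j n.+1) => [|hj2|->]; first by rewrite ltnNge hj.
  by rewrite mulr0 subr0 nth_default // sP.
by rewrite mulr1 lead_coefE sP subrr.
Qed.

Lemma size_sum_exp_eq_lead C D n m : size C = m.+2 -> size D = m.+2 ->
  lead_coef C = lead_coef D ->
  (n * m.+1 < size (\sum_(i < n.+1) C ^+ (n - i) * D ^+ i)%R)%N.
Proof.
move=> sC sD lCD.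
have [C0 D0] : C != 0 /\ D != 0 by rewrite -!size_poly_eq0 sC sD.
have g0 : lead_coef C != 0 by rewrite lead_coef_eq0.
pose S := \sum_(i < n.+1) C ^+ (n - i) * D ^+ i.
suff cS : S`_(n * m.+1) = lead_coef C ^+ n *+ n.+1.
  have : S`_(n * m.+1) != 0 by rewrite cS -mulr_natr mulf_neq0 ?expf_neq0 ?natr_char0_neq0.
  by rewrite ltnNge; apply: contra => /leq_sizeP ->.
rewrite /S coef_sum -[n.+1 in RHS]card_ord -sumr_const; apply: eq_bigr => i _.
have ni : (i <= n)%N by rewrite -ltnS.
have sCD : size (C ^+ (n - i) * D ^+ i) = (n * m.+1).+1.
  have sX (X : {poly K}) k : size X = m.+2 -> size (X ^+ k) = (m.+1 * k).+1.
    move=> sX; have X0 : X ^+ k != 0 by rewrite expf_neq0 // -size_poly_eq0 sX.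
    by rewrite -[LHS]prednK ?size_poly_gt0 // size_exp sX.
  by rewrite size_mul ?expf_neq0 // !sX // addSn addnS /= -mulnDr subnK // mulnC.
have -> : (n * m.+1)%N = (size (C ^+ (n - i) * D ^+ i)).-1 by rewrite sCD.
by rewrite -lead_coefE lead_coefM !lead_coef_exp -lCD -exprD subnK.
Qed.

Lemma comp_poly_eq_lead A B C D n m :
  size A = n.+2 -> size B = n.+2 -> size C = m.+2 -> size D = m.+2 ->
  lead_coef C = lead_coef D -> A \Po C = B \Po D -> (size (C - D)%R <= 1)%N.
Proof.
move=> sA sB sC sD lCD e.
have [C0 D0] : C != 0 /\ D != 0 by rewrite -!size_poly_eq0 sC sD.
have lAB : lead_coef A = lead_coef B.
  have := congr1 lead_coef e; rewrite !lead_coef_comp ?sC ?sD // sA sB -lCD.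
  by move/mulIf; apply; rewrite expf_neq0 ?lead_coef_eq0.
set a := lead_coef A; set A1 := A - a *: 'X^(n.+1); set B1 := B - a *: 'X^(n.+1).
have a0 : a != 0 by rewrite lead_coef_eq0 -size_poly_eq0 sA.
have sA1 : (size A1 <= n.+1)%N by exact: size_sub_lead_coefXn.
have sB1 : (size B1 <= n.+1)%N by rewrite /B1 /a lAB; exact: size_sub_lead_coefXn.
have eA : A = a *: 'X^(n.+1) + A1 by rewrite addrC subrK.
have eB : B = a *: 'X^(n.+1) + B1 by rewrite addrC subrK.
clearbody A1 B1.
(* The left side is a * (C - D) * S with deg S >= n (m + 1) by
   size_sum_exp_eq_lead, while the right side has degree at most n (m + 1). *)
have key : a *: (C ^+ n.+1 - D ^+ n.+1) = (B1 \Po D) - (A1 \Po C).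
  move: e; rewrite eA eB !comp_polyD !comp_polyZ !comp_Xn_poly scalerBr => e.
  by rewrite -[a *: C ^+ _](addrK (A1 \Po C)) e addrC addrA addKr.
have small : (size ((B1 \Po D) - (A1 \Po C))%R <= (n * m.+1).+1)%N.
  have sX (X Y : {poly K}) : (size X <= n.+1)%N -> size Y = m.+2 ->
      (size (X \Po Y) <= (n * m.+1).+1)%N.
    move=> sX sY; apply: (leq_trans (size_comp_poly_leq _ _)).
    by rewrite sY ltnS leq_mul2r /=; move: sX; case: (size X).
  rewrite (leq_trans (size_polyD _ _)) // size_polyN geq_max !sX //.
move: small; rewrite -key subrXX size_scale // /=.
have [->|CD0] := eqVneq (C - D) 0; first by rewrite size_poly0.
have big := size_sum_exp_eq_lead n sC sD lCD.
rewrite size_mul // -?size_poly_gt0 ?(leq_ltn_trans _ big) //.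
move: big; set s1 := size _; set s2 := size (C - D); lia.
Qed.

Lemma comp_poly_eq_lin A B C D :
  (1 < size A)%N -> size A = size B -> (1 < size C)%N -> size C = size D ->
  A \Po C = B \Po D ->
  exists mu, [/\ size mu = 2, D = mu \Po C & A = B \Po mu].
Proof.
move=> sA1 sAB sC1 sCD e.
have sA : size A = (size A).-2.+2 by case: (size A) sA1 => [|[|]].
have sC : size C = (size C).-2.+2 by case: (size C) sC1 => [|[|]].
have [C0 D0] : C != 0 /\ D != 0 by rewrite -!size_poly_eq0 -sCD sC.
pose r := lead_coef C / lead_coef D.
have r0 : r != 0 by rewrite mulf_neq0 ?invr_eq0 ?lead_coef_eq0.
have srX : size (r^-1 *: 'X) = 2 by rewrite size_scaleX ?invr_eq0.
have e' : A \Po C = (B \Po (r^-1 *: 'X)) \Po (r *: D).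
  by rewrite -comp_polyA comp_polyZ comp_polyX scalerA mulVf // scale1r.
have lead_rD : lead_coef C = lead_coef (r *: D) by rewrite lead_coefZ divfK ?lead_coef_eq0.
have := comp_poly_eq_lead sA _ sC _ lead_rD e'.
rewrite size_comp_poly2 // size_scale // -sAB -sCD => /(_ sA sC) /size1_polyC CDc.
pose mu := (r^-1 *: 'X) \Po ('X - ((C - r *: D)`_0)%:P).
have eD : D = mu \Po C.
  rewrite -comp_polyA comp_polyB comp_polyX comp_polyC -CDc opprB addrC subrK.
  by rewrite comp_polyZ comp_polyX scalerA mulVf // scale1r.
exists mu; split => //; first by rewrite size_comp_poly2 ?size_XsubC.
by apply: (comp_polyIr sC1); rewrite e {1}eD comp_polyA.
Qed.

Lemma scaleXn_addC_eq_scale_exp (a b c : K) (w : {poly K}) d :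
  size w = 2 -> c != 0 -> (1 < d)%N -> a *: 'X^d + b%:P = c *: w ^+ d ->
  w`_0 = 0 /\ b = 0.
Proof.
move=> sw c0 d1 E.
have d1_neq0 : (d.-1 == 0%N) = false by case: (d) d1 => [|[|]].
have w0 : w`_0 = 0.
  have := congr1 (fun p => p^`().[0]) E => /=.
  rewrite derivD derivZ derivXn derivC addr0 derivZ deriv_exp.
  rewrite !hornerZ !hornerMn hornerXn hornerM horner_exp !horner_coef0 coef_deriv.
  rewrite mulr1n expr0n d1_neq0 mul0rn mulr0 => /esym/eqP.
  rewrite -mulr_natr !mulf_eq0 (negbTE c0) (negbTE (lin_coef1_neq0 sw)).
  by rewrite (negbTE (natr_char0_neq0 (ltnW d1))) orbF /= expf_eq0 => /andP [_ /eqP].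
split=> //; have := congr1 (fun p => p.[0]) E => /=.
rewrite !hornerE horner_coef0 w0 expr0n; case: d d1 E {d1_neq0} => // d' _ _.
by rewrite mulr0 add0r => ->; rewrite mulr0.
Qed.

Lemma size_derivn_pred P d : size P = d.+1 -> (0 < d)%N -> size (P^`(d.-1)) = 2.
Proof.
move=> sP d0; apply/eqP; rewrite eqn_leq; apply/andP; split.
  apply/leq_sizeP => j hj; rewrite coef_derivn nth_default ?mul0rn // sP.
  by move: hj d0; case: (d) => // d'; lia.
have : (P^`(d.-1))`_1 != 0.
  rewrite coef_derivn addn1 prednK // -mulr_natr mulf_neq0 ?coef_deg_neq0 //.
  by rewrite natr_char0_neq0 // ffact_gt0 leq_pred.
by rewrite ltnNge; apply: contra => /leq_sizeP ->.
Qed.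

(* In characteristic zero this says that the coefficient of X^(deg P - 1) in P
   vanishes. *)
Definition centered P := (P^`((size P).-2)).[0] = 0.

Lemma centered_comp_lin_fix P v nu d : size P = d.+1 -> (1 < d)%N ->
  centered P -> size v = 2 -> size nu = 2 -> nu \Po (P \Po v) = P -> v`_0 = 0.
Proof.
rewrite /centered => sP d1; rewrite sP /= => P0 sv snu E.
have sQ := size_derivn_pred sP (ltnW d1).
have := congr1 (fun p => (p^`(d.-1)).[0]) E => /=.
rewrite [nu](lin_polyE (eq_leq snu)) comp_lin_polyE derivnD derivnZ derivnC.
have -> : (d.-1 == 0%N) = false by case: (d) d1 => [|[|]].
rewrite addr0 derivn_comp_lin // P0 !hornerZ horner_comp horner_coef0 => /eqP.
rewrite !mulf_eq0 (negbTE (lin_coef1_neq0 snu)) expf_eq0.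
rewrite (negbTE (lin_coef1_neq0 sv)) andbF /=.
rewrite [P^`(d.-1)](lin_polyE (eq_leq sQ)) hornerD hornerZ hornerX hornerC.
rewrite -horner_coef0 P0 addr0 mulf_eq0 (negbTE (lin_coef1_neq0 sQ)) /=.
by move/eqP.
Qed.

Lemma exists_centering F d : size F = d.+1 -> (1 < d)%N ->
  exists2 v : {poly K}, size v = 2 & centered (lin_conj v F).
Proof.
move=> sF d1; have sQ := size_derivn_pred sF (ltnW d1).
set Q := F^`(d.-1) in sQ; pose z := - Q`_0 / Q`_1.
have Qz : Q.[z] = 0.
  rewrite [Q](lin_polyE (eq_leq sQ)) hornerD hornerZ hornerX hornerC /z mulrC.
  by rewrite divfK ?lin_coef1_neq0 // addNr.
pose v := 'X - z%:P; have sv : size v = 2 by rewrite size_XsubC.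
have vz : (lin_inv v).[0] = z.
  rewrite horner_coef0 /lin_inv coefZ coefB coefX coefC /= sub0r /v lead_coefXsubC.
  by rewrite invr1 mul1r coefB coefX coefC /= sub0r opprK.
have sF1 : (1 < size F)%N by rewrite sF ltnS ltnW.
exists v => //; rewrite /centered size_lin_conj // sF /=.
rewrite /lin_conj /v comp_polyB comp_polyX comp_polyC derivnB derivnC.
have -> : (d.-1 == 0%N) = false by case: (d) d1 => [|[|]].
rewrite subr0 derivn_comp_lin ?size_lin_inv // hornerZ horner_comp -/v vz -/Q Qz.
by rewrite mulr0.
Qed.

Lemma centered_iter2_lin_sym F d beta rho : size F = d.+1 -> (1 < d)%N ->
  centered F -> size beta = 2 -> size rho = 2 ->
  F \Po (F \Po beta) = (rho \Po F) \Po F ->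
  exists2 b, beta = b *: 'X & forall i, (i < d)%N -> F`_i != 0 -> b ^+ (d - i) = 1.
Proof.
move=> sF d1 cF sbeta srho E.
have sF1 : (1 < size F)%N by rewrite sF ltnS ltnW.
have sFb : size (F \Po beta) = size F by rewrite size_comp_poly2.
have sFb1 : (1 < size (F \Po beta))%N by rewrite sFb.
have [nu [snu e1 e2]] := comp_poly_eq_lin sF1 (esym (size_comp_lin srho sF1)) sFb1 sFb E.
have b0 : beta`_0 = 0 by apply: (centered_comp_lin_fix sF d1 cF sbeta snu); rewrite -e1.
have n0 : nu`_0 = 0.
  by apply: (centered_comp_lin_fix sF d1 cF snu srho); rewrite comp_polyA -e2.
set b := beta`_1; set c := nu`_1.
have betaE : beta = b *: 'X by rewrite {1}(lin_polyE (eq_leq sbeta)) b0 addr0.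
have nuE : nu = c *: 'X by rewrite {1}(lin_polyE (eq_leq snu)) n0 addr0.
exists b => // i id Fi.
have cbF j : F`_j = c * (b ^+ j * F`_j).
  by rewrite {1}e1 nuE betaE comp_polyZ comp_polyX coefZ coef_comp_scaleX.
have Fd := coef_deg_neq0 sF.
have cbd : c * b ^+ d = 1 by apply: (mulIf Fd); rewrite mul1r -mulrA -cbF.
have cbi : c * b ^+ i = 1 by apply: (mulIf Fi); rewrite mul1r -mulrA -cbF.
apply: (mulfI (_ : c * b ^+ i != 0)); first by rewrite cbi oner_neq0.
by rewrite mulr1 -mulrA -exprD subnKC ?cbd // ltnW.
Qed.

End CharacteristicZero.

Section IteratesUpToLinear.
Variable K : fieldType.
Hypothesis char0 : [pchar K] =i pred0.
Variables (F l : {poly K}) (d : nat).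
Hypotheses (sF : size F = d.+1) (d_gt1 : (1 < d)%N) (sl : size l = 2).
Implicit Types (ln lm mu : {poly K}).
Local Notation G := (F \Po l).

Let sF1 : (1 < size F)%N. Proof. by rewrite sF ltnS ltnW. Qed.
Let sG : size G = size F. Proof. exact: size_comp_poly2. Qed.
Let size_iterG k : size (poly_iter G k) = size (poly_iter F k).
Proof. by rewrite !size_poly_iter ?sG. Qed.

Lemma poly_iter_lin_factor2 n ln : (1 < n)%N -> size ln = 2 ->
  poly_iter F n = poly_iter G n \Po ln ->
  exists2 mu : {poly K}, size mu = 2 & poly_iter G 2 \Po ln = mu \Po poly_iter F 2.
Proof.
move=> n1 sln; rewrite -(subnK n1) !poly_iterD -comp_polyA => E.
have [||||mu [smu e _]] := comp_poly_eq_lin char0 _ _ _ _ E; last by exists mu.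
- exact: size_poly_iter_gt1.
- by rewrite size_iterG.
- exact: size_poly_iter_gt1.
- by rewrite [RHS]size_comp_poly2 // size_iterG.
Qed.

Lemma scaleXn_iter_lin_coef0 c n ln : F = c *: 'X^d -> (1 < n)%N ->
  size ln = 2 -> poly_iter F n = poly_iter G n \Po ln -> l`_0 = 0.
Proof.
(* Two decompositions yield l \Po F = sigma \Po F \Po eta with sigma fixing 0;
   comparing constant terms gives l`_0 = 0. *)
move=> Fc n1 sln; rewrite -(subnK n1) addn2 !poly_iterS.
set m := (n - 2)%N; set R := poly_iter G m \Po ln => E.
have c0 : c != 0 by apply: contraTneq sF1 => c0; rewrite Fc c0 scale0r size_poly0.
have sR : size R = size (poly_iter F m) by rewrite size_comp_poly2 ?size_iterG.
have sGR : size (G \Po R) = size (poly_iter F m.+1).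
  by rewrite /R comp_polyA -poly_iterS size_comp_poly2 ?size_iterG.
have [sigma [ssigma e1 e2]] : exists mu, [/\ size mu = 2,
    l \Po (G \Po R) = mu \Po (F \Po poly_iter F m) & F = F \Po mu].
  apply: (comp_poly_eq_lin char0 sF1 erefl (size_poly_iter_gt1 m.+1 sF1)).
    by rewrite size_comp_lin // sGR size_poly_iter_gt1.
  by rewrite E !comp_polyA.
have sigma0 : sigma`_0 = 0.
  move: e2; rewrite Fc comp_polyZ comp_Xn_poly -[c *: 'X^d]addr0 -polyC0.
  by case/(scaleXn_addC_eq_scale_exp char0 ssigma c0 d_gt1).
have [mu [smu _ e3]] : exists mu, [/\ size mu = 2,
    poly_iter F m = mu \Po R & l \Po G = (sigma \Po F) \Po mu].
  have slG : size (l \Po G) = size F by rewrite size_comp_lin ?sG.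
  have slG1 : (1 < size (l \Po G))%N by rewrite slG.
  have sR1 : (1 < size R)%N by rewrite sR size_poly_iter_gt1.
  apply: (comp_poly_eq_lin char0 slG1 _ sR1 sR).
    by rewrite slG size_comp_lin.
  by rewrite -comp_polyA -[RHS]comp_polyA -e1.
have : l \Po F = (sigma \Po F) \Po (mu \Po lin_inv l).
  by rewrite comp_polyA -e3 -!comp_polyA lin_invVK // comp_polyXr.
rewrite [l in l \Po F](lin_polyE (eq_leq sl)) [sigma](lin_polyE (eq_leq ssigma)).
rewrite sigma0 !comp_lin_polyE comp_polyD comp_polyC comp_polyZ Fc comp_polyZ.
rewrite comp_Xn_poly !scalerA addr0 => /(scaleXn_addC_eq_scale_exp char0 _ _ d_gt1).
by case=> //; rewrite ?size_comp_poly2 ?size_lin_inv // mulf_neq0 ?lin_coef1_neq0.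
Qed.

Lemma lin_ratio_root_of_unity i n m ln lm : centered F -> (i < d)%N ->
  F`_i != 0 -> (1 < n)%N -> (1 < m)%N -> size ln = 2 -> size lm = 2 ->
  poly_iter F n = poly_iter G n \Po ln -> poly_iter F m = poly_iter G m \Po lm ->
  exists2 u, lin_inv ln \Po lm = u *: 'X & u ^+ (d - i) = 1.
Proof.
move=> cF id Fi n1 m1 sln slm En Em.
have [mun smun en] := poly_iter_lin_factor2 n1 sln En.
have [mum smum em] := poly_iter_lin_factor2 m1 slm Em.
set beta := lin_inv ln \Po lm; set rho := lin_inv mun \Po mum.
have lmE : lm = ln \Po beta by rewrite comp_polyA lin_invVK // comp_polyX.
have sbeta : size beta = 2 by rewrite size_comp_poly2 ?size_lin_inv.
have srho : size rho = 2 by rewrite size_comp_poly2 ?size_lin_inv.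
have E : poly_iter F 2 \Po beta = rho \Po poly_iter F 2.
  have h : mum \Po poly_iter F 2 = mun \Po (poly_iter F 2 \Po beta).
    by rewrite -em lmE comp_polyA en -comp_polyA.
  by rewrite -[RHS]comp_polyA h [RHS]comp_polyA lin_invK // comp_polyX.
have E' : F \Po (F \Po beta) = (rho \Po F) \Po F.
  by rewrite !poly_iter2 in E; rewrite comp_polyA E comp_polyA.
have [b betaE rootb] := centered_iter2_lin_sym char0 sF d_gt1 cF sbeta srho E'.
by exists b => //; apply: rootb.
Qed.

Lemma centered_iter_dichotomy : centered F ->
  (forall N, exists n, (N < n)%N /\
     exists ln, size ln = 2 /\ poly_iter F n = poly_iter G n \Po ln) ->
  (exists k, (0 < k)%N /\ poly_iter F k = poly_iter G k) \/
  exists c a : K, [/\ c != 0, a != 0, F = c *: 'X^d & l = a *: 'X].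
Proof.
move=> cF Finf; have [n0 [n0_gt1 [l0 [sl0 E0]]]] := Finf 1%N.
have [/existsP [i Fi]|/existsP Fmono] := boolP [exists i : 'I_d, F`_i != 0].
  (* Each ratio lin_inv l0 \Po ln is u X with u ^+ (d - i) = 1, so two of them
     coincide. *)
  left; pose R n u := exists ln, [/\ size ln = 2,
    poly_iter F n = poly_iter G n \Po ln & lin_inv l0 \Po ln = u *: 'X].
  have k_gt0 : (0 < d - i)%N by rewrite subn_gt0.
  have Rinf N : exists n u, [/\ (N < n)%N, u ^+ (d - i) = 1 & R n u].
    have [n [Nn [ln [sln En]]]] := Finf (maxn N 1).
    move: Nn; rewrite gtn_max => /andP [Nn n1].
    have [u lnE uk] := lin_ratio_root_of_unity cF (ltn_ord i) Fi n0_gt1 n1 sl0 sln E0 En.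
    by exists n, u; split => //; exists ln.
  have [m [n [u [mn [lm [slm Em um]] [ln [sln En un]]]]]] :=
    unity_root_collision k_gt0 Rinf.
  have lmn : lm = ln.
    rewrite -[lm]comp_polyX -(lin_invVK sl0) -comp_polyA um -un.
    by rewrite comp_polyA lin_invVK // comp_polyX.
  exists (n - m)%N; split; first by rewrite subn_gt0.
  by apply: (poly_iter_sub sF1 mn Em); rewrite lmn.
right; have FE : F = F`_d *: 'X^d.
  apply/polyP => j; rewrite coefZ coefXn.
  have [jd|dj|->] := ltngtP j d; last by rewrite mulr1.
    by rewrite mulr0; apply/eqP/negPn/negP => Fj; apply: Fmono; exists (Ordinal jd).
  by rewrite mulr0 nth_default // sF.
exists F`_d, l`_1; split; rewrite ?coef_deg_neq0 ?lin_coef1_neq0 //.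
by rewrite {1}(lin_polyE (eq_leq sl)) (scaleXn_iter_lin_coef0 FE n0_gt1 sl0 E0) addr0.
Qed.

End IteratesUpToLinear.

Theorem proposition3p3 (K : fieldType) (F l : {poly K}) (d : nat) :
  [pchar K] =i pred0 ->
  size F = d.+1 -> (1 < d)%N -> size l = 2%N ->
  (forall N : nat, exists n : nat, (N < n)%N /\
     exists ln : {poly K}, size ln = 2%N /\
       poly_iter F n = poly_iter (F \Po l) n \Po ln) ->
  (exists k : nat, (0 < k)%N /\ poly_iter F k = poly_iter (F \Po l) k)
  \/
  (exists (v : {poly K}) (eps delta : K),
     [/\ size v = 2%N, eps != 0, delta != 0,
         F = lin_inv v \Po ((eps *: 'X^d) \Po v) &
         l = lin_inv v \Po ((delta *: 'X) \Po v)]).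
Proof.
move=> char0 sF d1 sl Finf.
have [v sv cF] := exists_centering char0 sF d1.
have sF1 : (1 < size F)%N by rewrite sF ltnS ltnW.
have sF' : size (lin_conj v F) = d.+1 by rewrite size_lin_conj.
have sl' : size (lin_conj v l) = 2 by rewrite size_lin_conj // sl.
have Finf' N : exists n, (N < n)%N /\ exists ln : {poly K}, size ln = 2 /\
    poly_iter (lin_conj v F) n = poly_iter (lin_conj v F \Po lin_conj v l) n \Po ln.
  have [n [Nn [ln [sln En]]]] := Finf N.
  exists n; split => //; exists (lin_conj v ln); split; first by rewrite size_lin_conj ?sln.
  by rewrite -lin_conj_comp // !lin_conj_iter // En lin_conj_comp.
have [[k [k_gt0 Ek]]|[c [a [c0 a0 FE lE]]]] :=
  centered_iter_dichotomy char0 sF' d1 sl' cF Finf'.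
  left; exists k; split => //; move: Ek; rewrite -lin_conj_comp // !lin_conj_iter // => Ek.
  by rewrite -(lin_conjK (poly_iter F k) sv) Ek lin_conjK.
by right; exists v, c, a; split; rewrite // -?FE -?lE lin_conjK.
Qed.
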